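(* Let $T$ be a tournament of order $n\ge 3$. If $V(T)$ has a partition $X,Y$ with $\big||X|-|Y|\big|\le 1$ such that every arc of $T$ between $X$ and $Y$ goes from $X$ to $Y$ (i.e. $(x,y)\in A(T)$ for all $x\in X$, $y\in Y$), then $T$ has no $\overrightarrow{P_3}$-decomposition.
   Context: A tournament is an orientation of a complete graph. A $\overrightarrow{P_3}$-decomposition of a digraph is a partition of its arc set into directed paths of length $2$. *)

From mathcomp Require Import all_boot.
Set Implicit Arguments. Unset Strict Implicit. Unset Printing Implicit Defensive.

Definition tournament (V : finType) (a : rel V) : Prop :=
  (forall x, ~~ a x x) /\
  (forall x y, x != y -> (a x y (+) a y x)).

Definition dpath3 (V : finType) (a : rel V) (p : V * V * V) : bool :=
  let: (u, v, w) := p in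
  [&& a u v, a v w, u != v, v != w & u != w].

Definition path_arcs (V : finType) (p : V * V * V) : {set V * V} :=
  let: (u, v, w) := p in [set (u, v); (v, w)].

Definition P3_decomposition (V : finType) (a : rel V) (P : {set V * V * V}) : Prop :=
  (forall p, p \in P -> dpath3 a p) /\
  (forall x y, a x y -> #|[set p in P | (x, y) \in path_arcs p]| = 1).

Definition has_P3_decomposition (V : finType) (a : rel V) : Prop :=
  exists P : {set V * V * V}, P3_decomposition a P.

From mathcomp Require Import all_boot.
From mathcomp Require Import zify.
Set Implicit Arguments. Unset Strict Implicit.

(* In a P3-decomposition every arc has a partner, the other arc of its path,
   and this pairing is an involution. Since no arc goes from Y to X, the path
   through an arc x -> y (x in X, y in Y) continues y -> w with w in Y or comes
   from u -> x with u in X, so the partners of the |X||Y| cross arcs are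
   distinct arcs inside X or inside Y. There are only C(|X|,2) + C(|Y|,2) of
   those, which forces (|X| - |Y|)^2 >= |X| + |Y| = n >= 3, contradicting
   ||X| - |Y|| <= 1. *)

Definition arcs_within (V : finType) (a : rel V) (A : {set V}) : {set V * V} :=
  [set e in setX A A | a e.1 e.2].

Section Tournament.
Variables (V : finType) (a : rel V).
Hypothesis tour : tournament a.

Lemma tournament_asym x y : a x y -> ~~ a y x.
Proof.
move=> axy; have nxy : x != y by apply: contraTneq axy => ->; apply: tour.1.
by have := tour.2 x y nxy; rewrite axy.
Qed.

(* Each ordered pair of A x A is a loop, an arc or a reversed arc. *)
Lemma card_arcs_within A : 2 * #|arcs_within a A| + #|A| = #|A| * #|A|.
Proof.
set W := arcs_within a A; set S := setX A A.
set R := [set e in S | a e.2 e.1]; set D := [set e in S | e.1 == e.2].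
have cardR : #|R| = #|W|.
  rewrite -(card_preimset W (f := fun e : V * V => (e.2, e.1))); last first.
    by move=> [? ?] [? ?] [-> ->].
  by apply: eq_card => -[x y]; rewrite !inE /= [(y \in A) && _]andbC.
have cardD : #|D| = #|A|.
  rewrite -(card_imset A (f := fun v => (v, v))); last by move=> ? ? [].
  apply: eq_card => -[x y]; rewrite !inE /=; apply/andP/imsetP => /=.
    by case=> /andP [xA _] /eqP <-; exists x.
  by case=> v vA [-> ->]; rewrite vA.
have W_S : S :&: W = W by apply/setIidPr/subsetP => e; rewrite inE => /andP [].
have R_SW : (S :\: W) :&: R = R.
  apply/setIidPr/subsetP => -[x y]; rewrite !inE /= => /andP [-> ayx].
  by rewrite (negbTE (tournament_asym ayx)).
have D_SWR : (S :\: W) :\: R = D.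
  apply/setP => -[x y]; rewrite !inE /=.
  case: (x =P y) => [<-|/eqP nxy].
    by rewrite (negbTE (tour.1 x)) !andbF andbT.
  move: (tour.2 x y nxy).
  by case: (a x y); case: (a y x); case: (x \in A); case: (y \in A).
rewrite -[in RHS]cardsX -/S -(cardsID W S) -(cardsID R (S :\: W)).
by rewrite W_S R_SW D_SWR cardR cardD; lia.
Qed.

End Tournament.

Definition other_arc (V : finType) (p : V * V * V) (e : V * V) : V * V :=
  let: (u, v, w) := p in if e == (u, v) then (v, w) else (u, v).

Lemma other_arc_in (V : finType) (p : V * V * V) e :
  e \in path_arcs p -> other_arc p e \in path_arcs p.
Proof. by case: p => [[u v] w] _ /=; case: ifP => _; rewrite !inE eqxx ?orbT. Qed.

Lemma other_arc_adjacent (V : finType) (p : V * V * V) e : e \in path_arcs p ->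
  (other_arc p e).1 = e.2 \/ (other_arc p e).2 = e.1.
Proof.
case: p => [[u v] w]; rewrite /= !inE => /orP [] /eqP ->; rewrite ?eqxx.
  by left.
by case: ifP => [/eqP [-> ->]|_]; [left | right].
Qed.

Lemma other_arcK (V : finType) (a : rel V) p e : dpath3 a p -> e \in path_arcs p ->
  other_arc p (other_arc p e) = e.
Proof.
case: p => [[u v] w] /and5P [_ _ nuv _ _].
have vw_uv : ((v, w) == (u, v)) = false by rewrite xpair_eqE eq_sym (negbTE nuv).
by rewrite /= !inE => /orP [] /eqP ->; rewrite ?eqxx vw_uv ?eqxx.
Qed.

Lemma path_arcs_arc (V : finType) (a : rel V) p e : dpath3 a p ->
  e \in path_arcs p -> a e.1 e.2.
Proof.
by case: p => [[u v] w] /and5P [auv avw _ _ _]; rewrite /= !inE => /orP [] /eqP ->.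
Qed.

Section Decomposition.
Variables (V : finType) (a : rel V) (P : {set V * V * V}).
Hypothesis decP : P3_decomposition a P.

(* Junk value [e] when no path of [P] contains [e]. *)
Definition partner (e : V * V) : V * V :=
  if [pick p in P | e \in path_arcs p] is Some p then other_arc p e else e.

Lemma partnerP e : a e.1 e.2 ->
  exists2 p, p \in P & e \in path_arcs p /\ partner e = other_arc p e.
Proof.
case: e => x y axy; rewrite /partner; case: pickP => [p /andP [pP xyp] | none].
  by exists p.
suff : #|[set p in P | (x, y) \in path_arcs p]| = 0 by rewrite decP.2.
by apply: eq_card0 => p; rewrite inE none.
Qed.

Lemma decomposition_path_unique e p q : a e.1 e.2 -> p \in P -> q \in P ->
  e \in path_arcs p -> e \in path_arcs q -> p = q.
Proof.
case: e => x y axy pP qP xyp xyq; have /eqP/cards1P [r Pxy] := decP.2 x y axy.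
have : p \in [set r] by rewrite -Pxy inE pP xyp.
have : q \in [set r] by rewrite -Pxy inE qP xyq.
by rewrite !inE => /eqP -> /eqP ->.
Qed.

Lemma partner_arc e : a e.1 e.2 -> a (partner e).1 (partner e).2.
Proof.
move=> ae; have [p pP [ep ->]] := partnerP ae.
exact: path_arcs_arc (decP.1 p pP) (other_arc_in ep).
Qed.

Lemma partner_adjacent e : a e.1 e.2 -> (partner e).1 = e.2 \/ (partner e).2 = e.1.
Proof. by move=> ae; have [p _ [ep ->]] := partnerP ae; apply: other_arc_adjacent. Qed.

Lemma partnerK : {in [pred e | a e.1 e.2], involutive partner}.
Proof.
move=> e ae; have [p pP [ep pe]] := partnerP ae.
have [q qP [peq ->]] := partnerP (partner_arc ae).
have pe_p : partner e \in path_arcs p by rewrite pe other_arc_in.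
rewrite -(decomposition_path_unique (partner_arc ae) pP qP pe_p peq) pe.
exact: other_arcK (decP.1 p pP) ep.
Qed.

End Decomposition.

Section CrossArcs.
Variables (V : finType) (a : rel V) (X : {set V}) (P : {set V * V * V}).
Hypotheses (tour : tournament a) (decP : P3_decomposition a P).
Hypothesis cross : forall x y, x \in X -> y \in ~: X -> a x y.

(* No arc enters X, so the partner of an arc leaving X stays on one side. *)
Lemma partner_cross_within e : e \in setX X (~: X) ->
  partner P e \in arcs_within a X :|: arcs_within a (~: X).
Proof.
case: e => x y; rewrite inE /= => /andP [xX yY].
have axy : a (x, y).1 (x, y).2 by apply: cross.
have := partner_arc decP axy.
have := partner_adjacent decP axy; case: (partner P (x, y)) => u v /= + auv.
rewrite !inE /= auv !andbT => -[uy | vx]; subst.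
  case vX : (v \in X); last by rewrite -in_setC yY orbT.
  by have := tournament_asym tour (cross vX yY); rewrite auv.
case uX : (u \in X); first by rewrite xX.
have uY : u \in ~: X by rewrite inE uX.
by have := tournament_asym tour (cross xX uY); rewrite auv.
Qed.

Lemma card_cross_le_within :
  #|X| * #|~: X| <= #|arcs_within a X| + #|arcs_within a (~: X)|.
Proof.
have partner_inj : {in setX X (~: X) &, injective (partner P)}.
  apply: can_in_inj => e; rewrite inE => /andP [xX yY].
  exact: (partnerK decP) (cross xX yY).
rewrite -cardsX -(card_in_imset partner_inj).
apply: leq_trans (leq_card_setU _ _); apply: subset_leq_card.
by apply/subsetP => _ /imsetP [e eC ->]; apply: partner_cross_within.
Qed.

End CrossArcs.

Theorem corollary3p4 (V : finType) (a : rel V) (X : {set V}) :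
  tournament a -> 3 <= #|V| ->
  (#|X| <= #|~: X| + 1 /\ #|~: X| <= #|X| + 1) ->
  (forall x y, x \in X -> y \in ~: X -> a x y) ->
  ~ has_P3_decomposition a.
Proof.
move=> tour n_ge3 [balX balY] cross [P decP].
have := card_cross_le_within tour decP cross.
have := card_arcs_within tour X; have := card_arcs_within tour (~: X).
move: n_ge3; rewrite -(cardsC X); nia.
Qed.
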